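(* For every positive integer $N$ there exists a SudoQ of size $N^2\times N^2$ of maximal cardinality $N^4$, i.e. all of its $N^4$ entries are pairwise distinct (up to global phase).
   Context: A SudoQ of size $N^2\times N^2$ is an $N^2\times N^2$ array of unit vectors in $\mathbb{C}^{N^2}$ such that the entries of each row, each column, and each of the $N^2$ disjoint $N\times N$ blocks form an orthonormal basis of $\mathbb{C}^{N^2}$. Its cardinality is the number of distinct entries, vectors differing only by a global phase being considered equal. *)

From HB Require Import structures.
From mathcomp Require Import all_boot all_order all_algebra.
From mathcomp Require Import complex Rstruct zify.
From Stdlib Require Import Reals.
Set Implicit Arguments. Unset Strict Implicit. Unset Printing Implicit Defensive.
Import Order.TTheory GRing.Theory Num.Theory.
Local Open Scope ring_scope.

Definition CC : Type := complex R.
Definition CC_numClosed : numClosedFieldType := CC.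

Notation Cvec n := 'rV[CC_numClosed]_n.

Definition cdot (n : nat) (u v : Cvec n) : CC_numClosed :=
  \sum_(k < n) u 0 k * (v 0 k)^*.

Definition is_onb (n : nat) (I : finType) (f : I -> Cvec n) : Prop :=
  (forall i j : I, cdot (f i) (f j) = (i == j)%:R) /\
  (forall v : Cvec n, exists c : I -> CC_numClosed, v = \sum_(i : I) c i *: f i).

Local Open Scope nat_scope.
Lemma cell_index_proof (N : nat) (a i : 'I_N) : a * N + i < N * N.
Proof.
case: a i => a Ha [i Hi] /=; nia.
Qed.
Definition cell_index (N : nat) (a i : 'I_N) : 'I_(N * N) :=
  Ordinal (cell_index_proof a i).
Local Open Scope ring_scope.

(* An N^2 x N^2 array of vectors of C^(N^2); rows/columns indexed by 'I_(N*N),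
   the (a,b)-th N x N block consisting of the cells (a*N+i, b*N+j). *)
Definition is_SudoQ (N : nat) (S : 'I_(N * N) -> 'I_(N * N) -> Cvec (N * N)) : Prop :=
  (forall i j, cdot (S i j) (S i j) = 1) /\
  (forall r : 'I_(N * N), is_onb (fun c : 'I_(N * N) => S r c)) /\
  (forall c : 'I_(N * N), is_onb (fun r : 'I_(N * N) => S r c)) /\
  (forall a b : 'I_N,
      is_onb (fun p : 'I_N * 'I_N => S (cell_index a p.1) (cell_index b p.2))).

Definition phase_eq (n : nat) (u v : Cvec n) : Prop :=
  exists z : CC_numClosed, `|z| = 1 /\ u = z *: v.

Definition all_entries_distinct (N : nat) (S : 'I_(N * N) -> 'I_(N * N) -> Cvec (N * N)) : Prop :=
  forall i j k l : 'I_(N * N), (i, j) != (k, l) -> ~ phase_eq (S i j) (S k l).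

From Stdlib Require Import Reals.
From HB Require Import structures.
From mathcomp Require Import all_boot all_order all_algebra.
From mathcomp Require Import complex Rstruct ring lra.
Set Implicit Arguments. Unset Strict Implicit. Unset Printing Implicit Defensive.
Import Order.TTheory GRing.Theory Num.Theory.
Local Open Scope ring_scope.

(* For a scalar c with c + c^* + n|c|^2 = 0, the vectors e_m + c(1,...,1)
   (m < n) are the columns of the unitary I + (u - 1)J/n, u = 1 + nc, hence
   an orthonormal basis of C^n.  Choosing n such scalars c_k with negative
   imaginary parts gives n orthonormal bases no two vectors of which are
   proportional.  Indexing rows by (a, i) and columns by (b, j), the array
     S (a, i) (b, j) = (e_(i+b) + c_a 1) (x) (e_(a+j) + c_b 1)
   is a SudoQ: in a row a and i are fixed and (b, j) -> (i+b, b, a+j) is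
   injective, in a column symmetrically, and in a block a and b are fixed.
   Its entries are pairwise non-proportional because a tensor product of
   vectors with no zero entry determines its factors up to scalars. *)

Lemma sum_delta_mul (k : nat) (F : 'I_k -> CC_numClosed) (m : 'I_k) :
  \sum_(t < k) (t == m)%:R * F t = F m.
Proof.
rewrite (bigD1 m) //= eqxx mul1r big1 ?addr0 // => t /negbTE ->; exact: mul0r.
Qed.

Lemma natr_complex (k : nat) : (k%:R : CC_numClosed) = Complex (k%:R : R) 0.
Proof. by rewrite complexr0 rmorph_nat. Qed.

Lemma ImD_nat (b : nat) (z : CC_numClosed) : complex.Im (b%:R + z) = complex.Im z.
Proof. by rewrite raddfD /= raddfMn /= mul0rn add0r. Qed.

Definition admissible_shift (n : nat) (c : CC_numClosed) : Prop :=
  c + c^* + n%:R * (c * c^*) = 0.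

Definition shifted (n : nat) (c : CC_numClosed) (m : 'I_n) : Cvec n :=
  \row_t ((t == m)%:R + c).

Lemma cdot_shifted (n : nat) (c : CC_numClosed) (m m' : 'I_n) :
  admissible_shift n c -> cdot (shifted c m) (shifted c m') = (m == m')%:R.
Proof.
move=> adm_c; rewrite /cdot.
under eq_bigr => t _ do rewrite !mxE rmorphD /= conjC_nat mulrDl !mulrDr.
rewrite !big_split /= (sum_delta_mul (fun t => (t == m')%:R)).
rewrite (sum_delta_mul (fun=> c^*)).
under [X in _ + (X + _)]eq_bigr => t _ do rewrite mulrC.
rewrite (sum_delta_mul (fun=> c)) sumr_const card_ord -mulr_natl.
by rewrite -[RHS]addr0 -adm_c; ring.
Qed.

Lemma shifted_neq0 (n : nat) (c : CC_numClosed) (m t : 'I_n) :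
  complex.Im c < 0 -> shifted c m 0 t != 0.
Proof.
move=> Im_c; apply/eqP => /(congr1 (@complex.Im R)).
by rewrite mxE ImD_nat => Im_c0; move: Im_c; rewrite Im_c0 ltxx.
Qed.

Lemma shifted_coord (n : nat) (c c' w : CC_numClosed) (m m' t : 'I_n) :
  shifted c m = w *: shifted c' m' -> (t == m)%:R + c = w * ((t == m')%:R + c').
Proof. by move=> /(congr1 (fun v : Cvec n => v 0 t)); rewrite !mxE. Qed.

Lemma shifted_proportional_index (n : nat) (c c' w : CC_numClosed) (m m' : 'I_n) :
  complex.Im c < 0 -> complex.Im c' < 0 -> shifted c m = w *: shifted c' m' ->
  m = m'.
Proof.
move=> Im_c Im_c' prop; apply/eqP/contraT => neq_mm'.
have := shifted_coord m prop; have := shifted_coord m' prop.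
rewrite !eqxx eq_sym (negbTE neq_mm') !add0r mulr1n mulrDr mulr1 => at_m' at_m.
have w_N1 : w = -1.
  apply/eqP; rewrite -subr_eq0 opprK; apply/eqP/(addIr c).
  by rewrite add0r -addrA at_m.
rewrite w_N1 mulN1r in at_m.
have : complex.Im (1 + c + c') = 0 by rewrite at_m addNr.
rewrite !raddfD /= add0r => Im_sum.
by move: (ltrD Im_c Im_c'); rewrite Im_sum addr0 ltxx.
Qed.

(* Comparing the coordinates m and m + 1 != m forces w = 1. *)
Lemma shifted_proportional_shift (n : nat) (c c' w : CC_numClosed) (m : 'I_n.+2) :
  shifted c m = w *: shifted c' m -> c = c'.
Proof.
move=> prop.
have neq_m1m : m + 1 != m.
  by rewrite -[X in _ != X]addr0 (inj_eq (addrI m)) oner_eq0.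
have := shifted_coord m prop; have := shifted_coord (m + 1) prop.
rewrite eqxx (negbTE neq_m1m) !add0r mulrDr mulr1 => at_m1.
rewrite -at_m1 => at_m.
have w1 : w = 1 by apply: (addIr c).
by rewrite at_m1 w1 mul1r.
Qed.

(* c_k = (u_k - 1)/N with N = n + 1 and u_k = (s - i)/(s + i), s = k + 1: a
   point of the unit circle in the open lower half plane, so that 1 + N c_k
   has modulus 1. *)
Definition shift (n : nat) (k : 'I_n.+1) : CC_numClosed :=
  let s := (k.+1)%:R : R in let D := (n.+1)%:R * (s ^+ 2 + 1) in
  Complex (- 2 / D) (- 2 * s / D).

Lemma sqr_add1_gt0 (s : R) : 0 < s ^+ 2 + 1.
Proof. by rewrite ltr_wpDl // sqr_ge0. Qed.

Lemma Im_shift_lt0 (n : nat) (k : 'I_n.+1) : complex.Im (shift k) < 0.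
Proof.
rewrite /shift /= -mulrA nmulr_rlt0 ?divr_gt0 ?mulr_gt0 ?ltr0n ?sqr_add1_gt0 //.
lra.
Qed.

Lemma shift_admissible (n : nat) (k : 'I_n.+1) : admissible_shift n.+1 (shift k).
Proof.
rewrite /admissible_shift natr_complex /shift /=.
by congr Complex; field; rewrite !nat1r lt0r_neq0 ?sqr_add1_gt0 // pnatr_eq0.
Qed.

Lemma shift_inj (n : nat) : injective (@shift n).
Proof.
move=> k k' eq_kk'.
have Re_eq := congr1 (@complex.Re R) eq_kk'; have Im_eq := congr1 (@complex.Im R) eq_kk'.
rewrite /shift /= in Re_eq Im_eq.
suff : ((k.+1)%:R : R) = (k'.+1)%:R by move/eqP; rewrite eqr_nat eqSS => /eqP/val_inj.
have s_ratio (l : 'I_n.+1) : let D := (n.+1)%:R * (((l.+1)%:R : R) ^+ 2 + 1) in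
    (l.+1)%:R = (- 2 * (l.+1)%:R / D) / (- 2 / D).
  by move=> D; field; rewrite mulf_neq0 ?pnatr_eq0 ?lt0r_neq0 ?sqr_add1_gt0.
by rewrite [LHS]s_ratio [RHS]s_ratio /= Re_eq Im_eq.
Qed.

Lemma cdot_shifted_shift (n : nat) (k m m' : 'I_n.+1) :
  cdot (shifted (shift k) m) (shifted (shift k) m') = (m == m')%:R.
Proof. exact/cdot_shifted/shift_admissible. Qed.

Lemma shifted_shift_proportional (n : nat) (k k' m m' : 'I_n.+1) (w : CC_numClosed) :
  shifted (shift k) m = w *: shifted (shift k') m' -> k = k' /\ m = m'.
Proof.
move=> prop.
have eq_mm' := shifted_proportional_index (Im_shift_lt0 k) (Im_shift_lt0 k') prop.
split=> //; subst m'; case: n k k' m prop => [|n] k k' m prop.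
  by rewrite (ord1 k) (ord1 k').
exact/shift_inj/shifted_proportional_shift/prop.
Qed.

Definition cell_block (n : nat) (k : 'I_(n.+1 * n.+1)) : 'I_n.+1 := inord (k %/ n.+1).
Definition cell_offset (n : nat) (k : 'I_(n.+1 * n.+1)) : 'I_n.+1 := inord (k %% n.+1).

Lemma cell_index_block (n : nat) (a i : 'I_n.+1) : cell_block (cell_index a i) = a.
Proof.
by apply: val_inj; rewrite /cell_block /= divnMDl // divn_small // addn0 inordK.
Qed.

Lemma cell_index_offset (n : nat) (a i : 'I_n.+1) : cell_offset (cell_index a i) = i.
Proof. by apply: val_inj; rewrite /cell_offset /= modnMDl modn_small // inordK. Qed.

Lemma cell_indexK (n : nat) (k : 'I_(n.+1 * n.+1)) :
  cell_index (cell_block k) (cell_offset k) = k.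
Proof.
apply: val_inj; rewrite /cell_block /cell_offset /= !inordK ?ltn_mod -?divn_eq //.
by rewrite ltn_divLR.
Qed.

Lemma eq_cell (n : nat) (k k' : 'I_(n.+1 * n.+1)) :
  (k == k') = (cell_block k == cell_block k') && (cell_offset k == cell_offset k').
Proof.
apply/eqP/andP => [->//|[/eqP eq_blk /eqP eq_off]].
by rewrite -(cell_indexK k) -(cell_indexK k') eq_blk eq_off.
Qed.

Definition tensor (n : nat) (x y : Cvec n.+1) : Cvec (n.+1 * n.+1) :=
  \row_k (x 0 (cell_block k) * y 0 (cell_offset k)).

Lemma cdot_tensor (n : nat) (x y x' y' : Cvec n.+1) :
  cdot (tensor x y) (tensor x' y') = cdot x x' * cdot y y'.
Proof.
rewrite /cdot (reindex (fun p : 'I_n.+1 * 'I_n.+1 => cell_index p.1 p.2)) /=; last first.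
  apply: onW_bij; exists (fun k => (cell_block k, cell_offset k)) => [[a i]|k] /=.
    by rewrite cell_index_block cell_index_offset.
  exact: cell_indexK.
rewrite big_distrl /=; under [RHS]eq_bigr => a _ do rewrite big_distrr /=.
rewrite pair_big /=; apply: eq_bigr => -[a i] _.
by rewrite !mxE cell_index_block cell_index_offset rmorphM /=; ring.
Qed.

Lemma tensor_proportional (n : nat) (x y x' y' : Cvec n.+1) (z : CC_numClosed) :
  x 0 0 != 0 -> y 0 0 != 0 -> tensor x y = z *: tensor x' y' ->
  (exists w, x = w *: x') /\ (exists w, y = w *: y').
Proof.
move=> x0_neq0 y0_neq0 prop.
have coord a i : x 0 a * y 0 i = z * (x' 0 a * y' 0 i).
  have := congr1 (fun v : Cvec (n.+1 * n.+1) => v 0 (cell_index a i)) prop.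
  by rewrite !mxE cell_index_block cell_index_offset.
split.
  exists (z * y' 0 0 / y 0 0); apply/rowP => a; rewrite !mxE.
  by apply: (mulIf y0_neq0); rewrite coord; field.
exists (z * x' 0 0 / x 0 0); apply/rowP => i; rewrite !mxE.
by apply: (mulfI x0_neq0); rewrite coord; field.
Qed.

(* An orthonormal family of the right size is invertible as a matrix M
   (M M^* = 1), so its rows span everything. *)
Lemma onb_of_orthonormal (k : nat) (I : finType) (f : I -> Cvec k) :
  #|I| = k -> (forall i j, cdot (f i) (f j) = (i == j)%:R) -> is_onb f.
Proof.
move=> card_I orth; split => // v.
pose M := \matrix_(r < #|I|, t < k) f (enum_val r) 0 t.
pose M' := \matrix_(t < k, r < #|I|) (f (enum_val r) 0 t)^*.
have MM' : M *m M' = 1%:M.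
  apply/matrixP => r r'; rewrite !mxE.
  have := orth (enum_val r) (enum_val r'); rewrite /cdot (inj_eq enum_val_inj) => <-.
  by apply: eq_bigr => t _; rewrite !mxE.
have rank_M : \rank M = k.
  apply/eqP; rewrite eqn_leq rank_leq_col /=.
  by rewrite -{1}card_I -{1}(mxrank1 CC_numClosed #|I|) -MM' mxrankM_maxl.
have /submxP [D ->] : (v <= M)%MS by apply: submx_full; rewrite /row_full rank_M.
exists (fun i => D 0 (enum_rank i)); apply/rowP => t; rewrite !mxE summxE.
rewrite (reindex (@enum_val _ (pred_of_simpl (@predT I)))) /=; last first.
  by apply: onW_bij; exists (@enum_rank _) => [r|i]; rewrite ?enum_valK ?enum_rankK.
by apply: eq_bigr => r _; rewrite !mxE enum_valK.
Qed.

Section SudoQ.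

Variable n : nat.
Implicit Types (r c : 'I_(n.+1 * n.+1)) (a b : 'I_n.+1).

Definition sudoq r c : Cvec (n.+1 * n.+1) :=
  tensor (shifted (shift (cell_block r)) (cell_offset r + cell_block c))
         (shifted (shift (cell_block c)) (cell_block r + cell_offset c)).

Lemma cdot_sudoq_row r c c' : cdot (sudoq r c) (sudoq r c') = (c == c')%:R.
Proof.
rewrite /sudoq cdot_tensor cdot_shifted_shift (inj_eq (addrI _)) eq_cell.
have [<-|] := eqVneq (cell_block c) (cell_block c'); last by rewrite mul0r.
by rewrite cdot_shifted_shift (inj_eq (addrI _)) mul1r.
Qed.

Lemma cdot_sudoq_col c r r' : cdot (sudoq r c) (sudoq r' c) = (r == r')%:R.
Proof.
rewrite /sudoq cdot_tensor [X in _ * X]cdot_shifted_shift.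
rewrite (inj_eq (addIr _)) eq_cell.
have [<-|] := eqVneq (cell_block r) (cell_block r'); last by rewrite mulr0.
by rewrite cdot_shifted_shift (inj_eq (addIr _)) mulr1.
Qed.

Lemma cdot_sudoq_block a b (p p' : 'I_n.+1 * 'I_n.+1) :
  cdot (sudoq (cell_index a p.1) (cell_index b p.2))
       (sudoq (cell_index a p'.1) (cell_index b p'.2)) = (p == p')%:R.
Proof.
rewrite /sudoq !cell_index_block !cell_index_offset cdot_tensor.
rewrite !cdot_shifted_shift (inj_eq (addIr _)) (inj_eq (addrI _)).
by rewrite -natrM mulnb.
Qed.

Lemma sudoq_is_SudoQ : is_SudoQ sudoq.
Proof.
have card_cells : #|'I_(n.+1 * n.+1)| = (n.+1 * n.+1)%N by rewrite card_ord.
split; last split; last split.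
- by move=> r c; rewrite cdot_sudoq_row eqxx.
- by move=> r; apply: onb_of_orthonormal => // c c'; exact: cdot_sudoq_row.
- by move=> c; apply: onb_of_orthonormal => // r r'; exact: cdot_sudoq_col.
- move=> a b; apply: onb_of_orthonormal => [|p p']; last exact: cdot_sudoq_block.
  by rewrite card_prod card_ord.
Qed.

Lemma sudoq_entries_distinct : all_entries_distinct sudoq.
Proof.
move=> r c r' c' neq_cells [z [_ prop]].
have [[w1 prop1] [w2 prop2]] := tensor_proportional
  (shifted_neq0 _ _ (Im_shift_lt0 _)) (shifted_neq0 _ _ (Im_shift_lt0 _)) prop.
have [eq_a eq_ib] := shifted_shift_proportional prop1.
have [eq_b eq_aj] := shifted_shift_proportional prop2.
rewrite eq_a eq_b in eq_ib eq_aj.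
move: neq_cells; rewrite xpair_eqE !eq_cell eq_a eq_b (addIr _ eq_ib) (addrI _ eq_aj).
by rewrite !eqxx.
Qed.

End SudoQ.

Theorem mainTheorem19 (N : nat) (hN : (0 < N)%N) :
  exists S : 'I_(N * N) -> 'I_(N * N) -> Cvec (N * N),
    is_SudoQ S /\ all_entries_distinct S.
Proof.
case: N hN => [//|n] _.
by exists (@sudoq n); split; [exact: sudoq_is_SudoQ | exact: sudoq_entries_distinct].
Qed.
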